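(* Let $q$ be a prime power, $m>3$, $n=q^{2m}-1$, and define $Z_{des}=\{(x,y):1\le x,y\le n,\ xy<q^{2m}-1-q^{m-1}\}$ and, for integers $0\le k\le (2m-1)/2$, $Z_{des,k}=\{(x,y)\in Z_{des}: q^k-1<x\le q^{k+1}-1\}$. For odd $l\in\{1,3,\dots,2m-1\}$ let $f(x,y,l)=(-xq^l\bmod n)(-yq^l\bmod n)$. Then: (a) For all $0\le k\le(2m-1)/2$, $(x,y)\in Z_{des,k}$ and odd $l\in\{1,\dots,2m-1\}$ with $l\ne 2m-k-1$: $f(x,y,l)\ge q^{2m}-1-q^{m-1}$ if $m$ is even, and $f(x,y,l)\ge q^{2m}-1-q^{m}$ if $m$ is odd; these bounds are attained at $k=0$, $x=1$, $y=q^{2m}-1-q^{2m-l}$ with $l=m-1$ ($m$ even), respectively $l=m$ ($m$ odd). (b) For all $0\le k\le(2m-1)/2$, $(x,y)\in Z_{des,k}$ and $l=2m-k-1$ odd: if $m$ is odd then $f(x,y,l)\ge (q^m-1)^2$, with equality at $k=m-1$, $l=m$, $x=y=q^m-1$; if $m$ is even then $f(x,y,l)\ge q^{2m}-1$.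
   Context: Here $a\bmod n$ denotes the least nonnegative residue of $a$ modulo $n$. *)

From mathcomp Require Import all_boot.
Set Implicit Arguments. Unset Strict Implicit. Unset Printing Implicit Defensive.

Definition prime_power (q : nat) : Prop := exists p e, prime p /\ 0 < e /\ q = p ^ e.

Definition nN (q m : nat) : nat := q ^ (2 * m) - 1.

Definition negmod (n a : nat) : nat := (n - a %% n) %% n.

Definition in_Zdes (q m x y : nat) : bool :=
  [&& 1 <= x <= nN q m, 1 <= y <= nN q m & x * y < q ^ (2 * m) - 1 - q ^ (m - 1)].

Definition in_Zdesk (q m k x y : nat) : bool :=
  in_Zdes q m x y && (q ^ k - 1 < x <= q ^ k.+1 - 1).

Definition fxyl (q m x y l : nat) : nat :=
  negmod (nN q m) (x * q ^ l) * negmod (nN q m) (y * q ^ l).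

Definition odd_l (m l : nat) : bool := odd l && (1 <= l <= 2 * m - 1).

(* 0 <= k <= (2m-1)/2 (k integer) *)
Definition k_ok (m k : nat) : bool := 2 * k <= 2 * m - 1.

From mathcomp Require Import all_boot zify.

Set Implicit Arguments.
Unset Strict Implicit.

(* Write q^(2m) = n + 1, so that q^l * q^(2m-l) = 1 modulo n. If C is the
   least residue of -y q^l, multiplying by L = q^(2m-l) gives L C = -y
   (mod n); as C > 0 this forces L C + y >= n, i.e. C >= (n - y) / L.
   In part (a), when k + l >= 2m this bound applies to both factors and the
   product is already >= n. Otherwise x q^l < n / 2, so the x-factor is
   n - x q^l >= n / 2, and the product can only drop below n when the
   y-factor is 1; that pins down x = 1, f = n - q^l and q^(2m-l) > q^(m-1),
   i.e. l <= m.  In part (b), L = q^(k+1) > x: for k <= m - 2 the same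
   bound gives f >= n, and for k = m - 1 (so l = m and n + 1 = (q^m)^2) the
   congruence L C + y = 0 becomes the equation q^m C + y = n, from which
   f >= (q^m - 1)^2 is a direct estimate. *)

Lemma negmod_small n a : 0 < a < n -> negmod n a = n - a.
Proof. by case/andP=> a0 an; rewrite /negmod (modn_small an) modn_small //; lia. Qed.

Lemma dvdn_negmodD n a : 0 < n -> n %| negmod n a + a.
Proof.
move=> n0; apply/eqP; rewrite /negmod modnDml -modnDmr.
by rewrite subnK ?modnn // ltnW // ltn_mod.
Qed.

Lemma negmod_eq1 n a : 1 < n -> n %| a.+1 -> negmod n a = 1.
Proof.
move=> n1 dvd; have : a + negmod n a == a + 1 %[mod n].
  by rewrite addnC (eqP (dvdn_negmodD a (ltnW n1))) addn1 (eqP dvd).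
rewrite eqn_modDl (modn_small n1) modn_small => [/eqP //|].
by rewrite /negmod ltn_mod ltnW.
Qed.

Section NegmodScaled.

Variables (n L Q y : nat).
Hypotheses (LQ : L * Q = n.+1) (y_gt0 : 0 < y) (y_lt : y < n).

Lemma dvdn_negmod_scaled : n %| L * negmod n (y * Q) + y.
Proof.
have n0 : 0 < n by apply: leq_ltn_trans y_lt.
have := dvdn_mull L (dvdn_negmodD (y * Q) n0).
by rewrite mulnDr mulnCA LQ mulnS addnA dvdn_addl // dvdn_mull.
Qed.

Lemma negmod_scaled_gt0 : 0 < negmod n (y * Q).
Proof.
rewrite lt0n; apply/eqP=> C0; have := dvdn_negmod_scaled.
by rewrite C0 muln0 add0n; move/(dvdn_leq y_gt0); rewrite leqNgt y_lt.
Qed.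

Lemma negmod_scaled_lb : n <= L * negmod n (y * Q) + y.
Proof. by apply: dvdn_leq dvdn_negmod_scaled; rewrite addn_gt0 y_gt0 orbT. Qed.

End NegmodScaled.

Section PowerFacts.

Variable q : nat.
Hypothesis q_gt1 : 1 < q.

Lemma expn_gt1 i : 0 < i -> 2 <= q ^ i.
Proof. by move=> i0; apply: leq_trans (leq_pexp2l (ltnW q_gt1) i0); rewrite expn1. Qed.

Lemma expn_double_lb i j : i < j -> 2 * q ^ i <= q ^ j.
Proof.
by move=> ij; apply: leq_trans (leq_pexp2l (ltnW q_gt1) ij); rewrite expnS leq_mul2r q_gt1 orbT.
Qed.

End PowerFacts.

Lemma leq_mul_subn a b c n : a + b + c <= n -> c * n <= (n - a) * (n - b).
Proof.
move=> h; have -> : n = a + b + c + (n - (a + b + c)) by lia.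
set e := n - _; nia.
Qed.

Lemma residues_mul_lb n L x y A C : 0 < L -> x + y + L * L <= n ->
  n <= L * A + x -> n <= L * C + y -> n <= A * C.
Proof.
move=> L0 hsum hA hC; rewrite -(@leq_pmul2l (L * L)) ?muln_gt0 ?L0 //.
apply: leq_trans (leq_mul_subn hsum) _.
by rewrite mulnACA; apply: leq_mul; lia.
Qed.

Lemma residues_mul_lb_small n L Q P x y C : 0 < x -> 0 < P ->
  2 * L <= n.+1 -> 2 * (x * Q) <= n -> x * y < n - P -> 0 < C -> n <= L * C + y ->
  n <= (n - x * Q) * C \/ [/\ x = 1, C = 1 & P < L].
Proof.
move=> x0 P0 hL hxQ hxy C0 hC; case: (leqP 2 C) => C2.
  by left; apply: leq_trans (leq_mul (leqnn _) C2); lia.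
have C1 : C = 1 by lia.
have x1 : x = 1.
  apply/eqP; rewrite eqn_leq x0 andbT leqNgt; apply/negP => x2.
  have : 2 * y <= x * y by rewrite leq_mul2r x2 orbT.
  lia.
by right; split=> //; move: hxy; rewrite x1 mul1n; lia.
Qed.

Lemma residues_mul_lb_low n L Q x y C : 2 <= x -> x < L -> 4 * L <= Q ->
  L * Q = n.+1 -> x * y < n -> n <= L * C + y -> n <= (n - x * Q) * C.
Proof.
move=> x2 xL hLQ4 hLQ hxy hC.
have hA : 2 * L <= n - x * Q.
  have : x.+1 * Q <= L * Q by rewrite leq_mul2r xL orbT.
  rewrite mulSn; lia.
have : 2 * y <= x * y by rewrite leq_mul2r x2 orbT.
move=> hy; apply: leq_trans (_ : (2 * L) * C <= _); last by rewrite leq_mul2r hA orbT.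
by rewrite -mulnA; lia.
Qed.

Lemma residues_mul_lb_corner n q Q P y C : 2 <= q -> q * q <= P ->
  q * Q = n.+1 -> y < n - P -> n <= q * C + y -> n <= (n - Q) * C.
Proof.
move=> q2 qP hqQ hy hC.
have qC : q < C by rewrite -(ltn_pmul2l (ltnW q2)); lia.
have : 2 * Q <= n.+1 by rewrite -hqQ leq_mul2r q2 orbT.
have : 3 * (n - Q) <= (n - Q) * C by rewrite mulnC leq_mul2l; lia.
have : q <= q * q by rewrite leq_pmull; lia.
lia.
Qed.

Lemma leq_predn_sqr_mul R x a C t : x + a = R -> C + t = R ->
  0 < x -> 0 < a -> 0 < C -> 0 < t ->
  x * (t * R - 1) < R * R - 1 -> (R - 1) ^ 2 <= (a * R - 1) * C.
Proof.
move=> hxa hCt x0 a0 C0 t0 hxy.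
suff haC : R - 1 <= a * C.
  have : R * (R - 1) <= R * (a * C) by rewrite leq_mul2l haC orbT.
  have -> : (a * R - 1) * C = R * (a * C) - C.
    by rewrite mulnBl mul1n [a * R]mulnC mulnA.
  rewrite -mulnn mulnBl mul1n; lia.
rewrite leqNgt; apply/negP => haC.
have haC1 : a + C <= a * C + 1.
  have : a <= a * C by rewrite leq_pmulr.
  have : C - 1 <= a * (C - 1) by rewrite leq_pmull.
  rewrite mulnBr muln1; lia.
have ident : x * t + R * (a + C) = R * R + a * C.
  have := congr1 (muln a) hCt; rewrite -{1 2 3 4}hxa.
  rewrite !mulnDl !mulnDr; lia.
have : R * (a + C) <= R * (R - 1) by rewrite leq_mul2l; lia.
have : 0 < a * C by rewrite muln_gt0 a0.
have : R <= R * R by rewrite leq_pmull; lia.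
rewrite mulnBr muln1 => RR aC0 hRaC.
have : R.+1 * R <= x * t * R by rewrite leq_mul2r; lia.
move: hxy; rewrite mulnBr muln1 mulnA mulSn; lia.
Qed.

Lemma residues_mul_lb_top R x y C : 0 < x -> x < R -> 0 < y -> 0 < C ->
  x * y < R * R - 1 -> R * R - 1 %| R * C + y ->
  (R - 1) ^ 2 <= (R * R - 1 - x * R) * C.
Proof.
move=> x0 xR y0 C0 hxy hdvd.
have hxR : x.+1 * R <= R * R by rewrite leq_mul2r xR orbT.
have y_le_xy : y <= x * y by rewrite leq_pmull.
rewrite mulSn in hxR.
case: (leqP R C) => hRC.
  by rewrite -mulnn; apply: leq_mul; lia.
have hRC' : R * C + R <= R * R by rewrite addnC -mulnS leq_mul2l hRC orbT.
have hsum : R * C + y = R * R - 1.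
  case/dvdnP: hdvd => [[|[|c]]] hc; [lia | by rewrite hc mul1n |].
  have : 2 * (R * R - 1) <= c.+2 * (R * R - 1) by rewrite leq_mul2r; lia.
  lia.
have hA : R * R - 1 - x * R = (R - x) * R - 1 by rewrite mulnBl; lia.
rewrite hA; apply: (leq_predn_sqr_mul (x := x) (t := R - C)); lia.
Qed.

Lemma nN_succ q m : 0 < q -> (nN q m).+1 = q ^ (2 * m).
Proof. by move=> q0; rewrite /nN subn1 prednK // expn_gt0 q0. Qed.

Lemma in_ZdeskP q m k x y : in_Zdesk q m k x y ->
  [/\ 0 < x, 0 < y, q ^ k <= x < q ^ k.+1 & x * y < nN q m - q ^ (m - 1)].
Proof.
rewrite /in_Zdesk /in_Zdes /nN.
by move=> /andP[/and3P[/andP[x0 _] /andP[y0 _] hxy] /andP[hkx hxk]]; split=> //; lia.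
Qed.

Lemma in_Zdesk_wrap_sum q m k l x y : 1 < q -> 3 < m -> k_ok m k ->
  l < 2 * m -> 2 * m <= k + l -> in_Zdesk q m k x y ->
  x + y + q ^ (2 * m - l) * q ^ (2 * m - l) <= nN q m.
Proof.
rewrite /k_ok => q1 m3 hk l2 hkl /in_ZdeskP[x0 y0 /andP[hkx hxk] hxy].
have hn := nN_succ m (ltnW q1).
have hGN : 4 * q ^ (2 * m - 2) <= q ^ (2 * m).
  rewrite -[4]/(2 * 2) -mulnA; apply: leq_trans (expn_double_lb q1 (_ : 2 * m - 1 < _)).
    by rewrite leq_mul2l /= expn_double_lb //; lia.
  lia.
have hxG : x < q ^ (2 * m - 2).
  by apply: leq_trans (leq_pexp2l (ltnW q1) (_ : k.+1 <= _)); lia.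
have hLL : q ^ (2 * m - l) * q ^ (2 * m - l) <= q ^ (2 * m - 2).
  by rewrite -expnD leq_exp2l //; lia.
have hLx : q ^ (2 * m - l) <= x.
  by apply: leq_trans (leq_pexp2l (ltnW q1) (_ : 2 * m - l <= k)) _; lia.
have hLy : 2 * y <= x * y.
  by rewrite leq_mul2r (leq_trans (expn_gt1 q1 _) hLx) ?orbT //; lia.
lia.
Qed.

Lemma fxyl_bound_a_cases q m k x y l : 1 < q -> 3 < m -> k_ok m k ->
  in_Zdesk q m k x y -> odd_l m l -> l != 2 * m - k - 1 ->
  nN q m <= fxyl q m x y l \/ fxyl q m x y l = nN q m - q ^ l /\ l <= m.
Proof.
move=> q1 m3 hk hZ /andP[_ /andP[l1 l2]] hl.
have [x0 y0 /andP[_ hxk] hxy] := in_ZdeskP hZ.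
rewrite /fxyl; set n := nN q m in hxy *; have hn := nN_succ m (ltnW q1).
have pos j : 0 < q ^ j by rewrite expn_gt0 ltnW.
have hLQ : q ^ (2 * m - l) * q ^ l = n.+1 by rewrite -expnD subnK ?hn //; lia.
have x_le_xy : x <= x * y by rewrite leq_pmulr.
have y_le_xy : y <= x * y by rewrite leq_pmull.
have xn : x < n by lia.
have yn : y < n by lia.
have hC := negmod_scaled_lb hLQ y0 yn.
case: (leqP (2 * m) (k + l)) => hkl.
  left; apply: residues_mul_lb (negmod_scaled_lb hLQ x0 xn) hC; first exact: pos.
  by apply: in_Zdesk_wrap_sum hZ => //; lia.
have hkl' : k + l <= 2 * m - 2 by move: hl; rewrite -(eqn_add2l k); lia.
have hTN : 2 * q ^ (2 * m - 1) <= n.+1 by rewrite hn expn_double_lb //; lia.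
have xQ : 2 * (x * q ^ l) <= n.
  have : x * q ^ l < q ^ (2 * m - 1).
    apply: leq_trans (_ : q ^ k.+1 * q ^ l <= _); first by rewrite ltn_mul2r pos.
    by rewrite -expnD leq_exp2l //; lia.
  lia.
have hL : 2 * q ^ (2 * m - l) <= n.+1.
  by apply: leq_trans hTN; rewrite leq_mul2l leq_exp2l //; lia.
rewrite negmod_small; last by rewrite muln_gt0 x0 pos; lia.
have [|[x1 -> hPL]] := residues_mul_lb_small x0 (pos _) hL xQ hxy
  (negmod_scaled_gt0 hLQ y0 yn) hC; first by left.
by right; rewrite x1 mul1n muln1; split=> //; move: hPL; rewrite ltn_exp2l //; lia.
Qed.

Lemma fxyl_bound_a q m k x y l : 1 < q -> 3 < m -> k_ok m k ->
  in_Zdesk q m k x y -> odd_l m l -> l != 2 * m - k - 1 ->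
  if ~~ odd m then q ^ (2 * m) - 1 - q ^ (m - 1) <= fxyl q m x y l
  else q ^ (2 * m) - 1 - q ^ m <= fxyl q m x y l.
Proof.
move=> q1 m3 hk hZ hl hlk; have /andP[lodd _] := hl.
have [|[-> lm]] := fxyl_bound_a_cases q1 m3 hk hZ hl hlk; rewrite /nN.
  by case: ifP => _; lia.
case: ifPn => hm; rewrite leq_sub2l // leq_exp2l //.
by move: hm; apply: contraNT; rewrite -ltnNge => ml; rewrite (_ : m = l) //; lia.
Qed.

Lemma fxyl_corner q m l : 1 < q -> 0 < l < 2 * m ->
  fxyl q m 1 (q ^ (2 * m) - 1 - q ^ (2 * m - l)) l = q ^ (2 * m) - 1 - q ^ l.
Proof.
move=> q1 /andP[l0 l2m]; rewrite /fxyl -/(nN q m) mul1n.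
set n := nN q m; have hn := nN_succ m (ltnW q1).
have L2 : 1 < q ^ (2 * m - l) by apply: expn_gt1; lia.
have Q2 := expn_gt1 q1 l0.
have hLQ : q ^ (2 * m - l) * q ^ l = n.+1 by rewrite -expnD subnK ?hn //; lia.
have LQ4 := leq_mul L2 Q2; rewrite hLQ in LQ4.
rewrite [negmod n (_ * _)]negmod_eq1; last 2 first.
- lia.
- apply/dvdnP; exists (q ^ l).-1.
  have : n * 2 <= n * q ^ l by rewrite leq_mul2l Q2 orbT.
  by rewrite mulnBl hLQ -subn1 mulnBl mul1n [q ^ l * n]mulnC; lia.
have hQ : 2 * q ^ l <= n.+1 by rewrite -hLQ leq_mul2r L2 orbT.
have Qn : 0 < q ^ l < n by lia.
by rewrite muln1 negmod_small.
Qed.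

Lemma extremal_point_a q m l : 1 < q -> 3 < m -> m - 1 <= l <= m -> odd l ->
  let y := q ^ (2 * m) - 1 - q ^ (2 * m - l) in
  [/\ k_ok m 0, in_Zdesk q m 0 1 y, odd_l m l, l != 2 * m - 0 - 1 &
      fxyl q m 1 y l = q ^ (2 * m) - 1 - q ^ l].
Proof.
move=> q1 m3 hl lodd y; rewrite fxyl_corner //; last by lia.
have hPL : 2 * q ^ (m - 1) <= q ^ (2 * m - l) by apply: expn_double_lb; lia.
have hLN : 2 * q ^ (2 * m - l) <= q ^ (2 * m) by apply: expn_double_lb; lia.
rewrite /k_ok /in_Zdesk /in_Zdes /odd_l /nN /y expn0 expn1 lodd.
split=> //; rewrite ?mul1n; lia.
Qed.

Lemma fxyl_diag_factor q m k x y : 1 < q -> k < m -> in_Zdesk q m k x y ->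
  exists2 C, 0 < C /\ nN q m %| q ^ k.+1 * C + y &
    fxyl q m x y (2 * m - k - 1) = (nN q m - x * q ^ (2 * m - k - 1)) * C.
Proof.
move=> q1 km hZ; have [x0 y0 /andP[_ xL] hxy] := in_ZdeskP hZ.
rewrite /fxyl; set n := nN q m in hxy *; set l := 2 * m - k - 1.
have hLQ : q ^ k.+1 * q ^ l = n.+1.
  by rewrite -expnD nN_succ ?(ltnW q1) //; congr (_ ^ _); lia.
have y_le_xy : y <= x * y by rewrite leq_pmull.
have yn : y < n by lia.
exists (negmod n (y * q ^ l)).
  by split; [exact: negmod_scaled_gt0 hLQ y0 yn | exact: dvdn_negmod_scaled].
have Q2 : 1 < q ^ l by apply: expn_gt1 => //; lia.
have : x.+1 * q ^ l <= q ^ k.+1 * q ^ l by rewrite leq_mul2r xL orbT.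
rewrite mulSn => hxQ; rewrite negmod_small // muln_gt0 x0; lia.
Qed.

Lemma fxyl_bound_b_low q m k x y : 1 < q -> 3 < m -> k <= m - 2 ->
  in_Zdesk q m k x y -> nN q m <= fxyl q m x y (2 * m - k - 1).
Proof.
move=> q1 m3 hkm hZ; have [x0 y0 /andP[hkx xL] hxy] := in_ZdeskP hZ.
have km : k < m by lia.
have [C [C0 hdvd] ->] := fxyl_diag_factor q1 km hZ.
set n := nN q m in hxy hdvd *; set l := 2 * m - k - 1.
have hLQ : q ^ k.+1 * q ^ l = n.+1.
  by rewrite -expnD nN_succ ?(ltnW q1) //; congr (_ ^ _); lia.
have hC : n <= q ^ k.+1 * C + y by apply: dvdn_leq hdvd; rewrite addn_gt0 y0 orbT.
case: (leqP x 1) => hx1.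
  have k0 : k = 0 by apply/eqP; rewrite -leqn0 -(leq_exp2l _ _ q1) expn0; lia.
  have x1 : x = 1 by lia.
  rewrite x1 mul1n; move: hLQ hC hxy; rewrite k0 expn1 x1 mul1n => hLQ hC hxy.
  have qP : q * q <= q ^ (m - 1) by rewrite -[q * q]/(q ^ 2) leq_exp2l //; lia.
  exact: residues_mul_lb_corner q1 qP hLQ hxy hC.
apply: residues_mul_lb_low hx1 xL _ hLQ _ hC; last by lia.
rewrite -[4]/(2 * 2) -mulnA; apply: leq_trans (expn_double_lb q1 (_ : k.+2 < l)).
  by rewrite leq_mul2l /= expn_double_lb.
lia.
Qed.

Lemma fxyl_bound_b_top q m x y : 1 < q -> 3 < m -> in_Zdesk q m (m - 1) x y ->
  (q ^ m - 1) ^ 2 <= fxyl q m x y m.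
Proof.
move=> q1 m3 hZ; have [x0 y0 /andP[_ xL] hxy] := in_ZdeskP hZ.
have m1m : m - 1 < m by lia.
have [C [C0 hdvd]] := fxyl_diag_factor q1 m1m hZ.
have [e1 e2] : 2 * m - (m - 1) - 1 = m /\ (m - 1).+1 = m by lia.
rewrite e1 e2 in hdvd xL * => ->; have hN : q ^ m * q ^ m = (nN q m).+1.
  by rewrite -expnD nN_succ ?(ltnW q1) //; congr (_ ^ _); lia.
move: hxy hdvd hN xL; set n := nN q m; set R := q ^ m => hxy hdvd hN xL.
have hnR : n = R * R - 1 by rewrite hN subn1.
rewrite hnR in hxy hdvd *; apply: (residues_mul_lb_top (y := y)) => //; lia.
Qed.

Lemma fxyl_bound_b q m k x y : 1 < q -> 3 < m -> k_ok m k ->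
  in_Zdesk q m k x y -> odd_l m (2 * m - k - 1) ->
  if odd m then (q ^ m - 1) ^ 2 <= fxyl q m x y (2 * m - k - 1)
  else q ^ (2 * m) - 1 <= fxyl q m x y (2 * m - k - 1).
Proof.
rewrite /k_ok => q1 m3 hk hZ /andP[lodd _].
case: (leqP k (m - 2)) => hkm.
  have hR : (q ^ m - 1) ^ 2 <= q ^ (2 * m) - 1.
    by rewrite mulnC expnM -!mulnn mulnBl mulnBr; lia.
  have := fxyl_bound_b_low q1 m3 hkm hZ; rewrite /nN.
  by case: ifP => _; lia.
have km : k = m - 1 by lia.
rewrite km (_ : 2 * m - (m - 1) - 1 = m) in lodd *; last by lia.
by rewrite lodd; apply: fxyl_bound_b_top => //; rewrite -km.
Qed.

Lemma extremal_point_b q m : 1 < q -> 3 < m -> odd m ->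
  [/\ k_ok m (m - 1), in_Zdesk q m (m - 1) (q ^ m - 1) (q ^ m - 1),
      m = 2 * m - (m - 1) - 1, odd_l m m &
      fxyl q m (q ^ m - 1) (q ^ m - 1) m = (q ^ m - 1) ^ 2].
Proof.
move=> q1 m3 modd.
have hPR : 2 * q ^ (m - 1) <= q ^ m by apply: expn_double_lb; lia.
have hP4 : 2 * q ^ 1 <= q ^ (m - 1) by apply: expn_double_lb; lia.
have hN : q ^ (2 * m) = q ^ m * q ^ m by rewrite -expnD; congr (_ ^ _); lia.
rewrite /k_ok /in_Zdesk /in_Zdes /odd_l /fxyl /nN hN (_ : (m - 1).+1 = m); last by lia.
rewrite expn1 in hP4.
move: hPR hP4; set R := q ^ m; set P := q ^ (m - 1) => hPR hP4.
have hRR : 4 * R <= R * R by rewrite leq_mul2r; lia.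
have hsq : (R - 1) * (R - 1) = R * R - R - R + 1.
  by rewrite mulnBl mul1n mulnBr muln1; lia.
have hRm : (R - 1) * R = R * R - R by rewrite mulnBl mul1n.
rewrite negmod_small; last by rewrite hRm; lia.
rewrite modd hRm -mulnn hsq; split=> //; lia.
Qed.

Lemma prime_power_gt1 q : prime_power q -> 1 < q.
Proof.
case=> p [e [pp [e0 ->]]]; apply: leq_trans (prime_gt1 pp) _.
by rewrite -{1}(expn1 p) leq_pexp2l // prime_gt0.
Qed.

Theorem lemma9 (q m : nat) (hq : prime_power q) (hm : 3 < m) :
  (* (a) *)
  ((forall k x y l, k_ok m k -> in_Zdesk q m k x y -> odd_l m l ->
      l != 2 * m - k - 1 ->
      (if ~~ odd m then q ^ (2 * m) - 1 - q ^ (m - 1) <= fxyl q m x y l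
       else q ^ (2 * m) - 1 - q ^ m <= fxyl q m x y l)) /\
   (~~ odd m ->
      let l := m - 1 in let y := q ^ (2 * m) - 1 - q ^ (2 * m - l) in
      [/\ k_ok m 0, in_Zdesk q m 0 1 y, odd_l m l, l != 2 * m - 0 - 1 &
          fxyl q m 1 y l = q ^ (2 * m) - 1 - q ^ (m - 1)]) /\
   (odd m ->
      let l := m in let y := q ^ (2 * m) - 1 - q ^ (2 * m - l) in
      [/\ k_ok m 0, in_Zdesk q m 0 1 y, odd_l m l, l != 2 * m - 0 - 1 &
          fxyl q m 1 y l = q ^ (2 * m) - 1 - q ^ m])) /\
  (* (b) *)
  ((forall k x y, k_ok m k -> in_Zdesk q m k x y -> odd_l m (2 * m - k - 1) ->
      (if odd m then (q ^ m - 1) ^ 2 <= fxyl q m x y (2 * m - k - 1)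
       else q ^ (2 * m) - 1 <= fxyl q m x y (2 * m - k - 1))) /\
   (odd m ->
      [/\ k_ok m (m - 1), in_Zdesk q m (m - 1) (q ^ m - 1) (q ^ m - 1),
          m = 2 * m - (m - 1) - 1, odd_l m m &
          fxyl q m (q ^ m - 1) (q ^ m - 1) m = (q ^ m - 1) ^ 2])).
Proof.
have q1 := prime_power_gt1 hq.
split; [split; [|split] | split].
- by move=> k x y l; apply: fxyl_bound_a.
- move=> meven; apply: extremal_point_a => //; first by lia.
  by rewrite oddB ?addbT //; lia.
- by move=> modd; apply: extremal_point_a => //; lia.
- by move=> k x y; apply: fxyl_bound_b.
- exact: extremal_point_b.
Qed.
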